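(* Let $a_0,a_1,a_2,a_3\in\mathbb{R}$ and consider the monic binary quartic form $$f(x,y)=x^4+a_3x^3y+a_2x^2y^2+a_1xy^3+a_0y^4 .$$ Let $$b_1=\tfrac14\,(4a_0-a_2^2-a_1a_3),\qquad b_2=\tfrac{a_2}{2},\qquad \lambda_0=\frac{4b_2+2\sqrt{3b_1+4b_2^2}}{3}.$$ Then $f$ is positive semi-definite if and only if $\lambda_0$ is a real number and the $3\times 3$ real symmetric matrix $$\mathbf{M}_{\lambda_0}=\begin{bmatrix}1&\frac{a_3}{2}&\frac{a_2-\lambda_0}{2}\\[2pt] \frac{a_3}{2}&\lambda_0&\frac{a_1}{2}\\[2pt] \frac{a_2-\lambda_0}{2}&\frac{a_1}{2}&a_0\end{bmatrix}$$ is positive semi-definite. Likewise, $f$ is positive definite if and only if $\lambda_0$ is a real number and $\mathbf{M}_{\lambda_0}$ is positive definite.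
   Context: A binary form $f(x,y)$ with real coefficients is positive definite (resp. positive semi-definite) if $f(x,y)>0$ (resp. $f(x,y)\ge 0$) for all real $x,y$ not both zero. The quantity $\lambda_0$ is real exactly when $3b_1+4b_2^2\ge 0$. *)

From HB Require Import structures.
From mathcomp Require Import all_boot all_order all_algebra.
Set Implicit Arguments. Unset Strict Implicit. Unset Printing Implicit Defensive.
Import Order.TTheory GRing.Theory Num.Theory.
Local Open Scope ring_scope.

Definition quartic (R : rcfType) (a0 a1 a2 a3 : R) (x y : R) : R :=
  x ^+ 4 + a3 * x ^+ 3 * y + a2 * x ^+ 2 * y ^+ 2 + a1 * x * y ^+ 3 + a0 * y ^+ 4.

Definition form_psd (R : rcfType) (f : R -> R -> R) : Prop :=
  forall x y : R, ~ (x = 0 /\ y = 0) -> 0 <= f x y.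
Definition form_pd (R : rcfType) (f : R -> R -> R) : Prop :=
  forall x y : R, ~ (x = 0 /\ y = 0) -> 0 < f x y.

Definition mx_psd (R : rcfType) (n : nat) (M : 'M[R]_n) : Prop :=
  forall v : 'cV[R]_n, 0 <= (v^T *m M *m v) 0 0.
Definition mx_pd (R : rcfType) (n : nat) (M : 'M[R]_n) : Prop :=
  forall v : 'cV[R]_n, v != 0 -> 0 < (v^T *m M *m v) 0 0.

Definition b1 (R : rcfType) (a0 a1 a2 a3 : R) : R :=
  (4 * a0 - a2 ^+ 2 - a1 * a3) / 4.
Definition b2 (R : rcfType) (a2 : R) : R := a2 / 2.

(* lambda0 is real exactly when its radicand is nonnegative. *)
Definition lambda0_real (R : rcfType) (a0 a1 a2 a3 : R) : Prop :=
  0 <= 3 * b1 a0 a1 a2 a3 + 4 * b2 a2 ^+ 2.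

(* Its value (meaningful when lambda0_real holds). *)
Definition lambda0 (R : rcfType) (a0 a1 a2 a3 : R) : R :=
  (4 * b2 a2 + 2 * Num.sqrt (3 * b1 a0 a1 a2 a3 + 4 * b2 a2 ^+ 2)) / 3.

Definition Mlam (R : rcfType) (a0 a1 a2 a3 lam : R) : 'M[R]_3 :=
  \matrix_(i < 3, j < 3)
    nth 0 (nth [::]
      [:: [:: 1; a3 / 2; (a2 - lam) / 2];
          [:: a3 / 2; lam; a1 / 2];
          [:: (a2 - lam) / 2; a1 / 2; a0]] i) j.

(* The nonnegative monic quartic p(t) = f(t, 1) has a complex root a + ib. Dividing p by
   (t - a)^2 + b^2 leaves a remainder that must vanish (when b = 0 because p >= 0 near its
   real root a) and a quotient (t - e)^2 + f with f >= 0. Multiplying the two sums of two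
   squares gives
     f(x, y) = ((x + h y)^2 + B y^2)^2 + (g (x + h y) y + D y^2)^2.
   In these coordinates the Gram form of M_lambda0 is, after completing the square in its
   first variable, a square plus the binary form L w^2 + 2gD w z + C z^2, where L, C >= 0
   and 27 (4 L C - (2gD)^2) = (X - s)^2 (X + 2s) with X = g^2 - 4B and
   s = 2 sqrt(3 b1 + 4 b2^2) >= |X| / 2. This discriminant vanishes only if both squares
   have a common real zero, i.e. only if f is not definite. Conversely v = (x^2, xy, y^2)
   gives v^T M_lambda v = f(x, y) for every lambda. *)

From mathcomp Require Import all_boot all_order all_algebra.
From mathcomp Require Import ring lra complex.
Import Order.TTheory GRing.Theory Num.Theory.
Set Implicit Arguments. Unset Strict Implicit. Unset Printing Implicit Defensive.
Local Open Scope ring_scope.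

Section RealInequalities.
Variable R : rcfType.
Implicit Types (a b d e f r s y A Bc C w z : R).

Lemma ler_of_sqr_le y s : 0 <= s -> y ^+ 2 <= s ^+ 2 -> y <= s.
Proof.
move=> s_ge0 le_sqr; apply: le_trans (ler_norm y) _.
by rewrite -(ger0_norm s_ge0) -!sqrtr_sqr ler_sqrt // sqr_ge0.
Qed.

Lemma binary_quadratic_ge0 A Bc C w z :
  0 <= A -> 0 <= C -> Bc ^+ 2 <= 4 * A * C ->
  0 <= A * w ^+ 2 + Bc * w * z + C * z ^+ 2.
Proof.
move=> A_ge0 C_ge0 disc_le0.
have [A0 | A_neq0] := eqVneq A 0.
  have : Bc ^+ 2 <= 0 by rewrite A0 in disc_le0; lra.
  rewrite le_eqVlt ltNge sqr_ge0 orbF sqrf_eq0 => /eqP Bc0.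
  by rewrite A0 Bc0 !mul0r !add0r mulr_ge0 // sqr_ge0.
have A_gt0 : 0 < 4 * A by rewrite mulr_gt0 // lt_def A_neq0.
rewrite -(pmulr_rge0 _ A_gt0).
have -> : 4 * A * (A * w ^+ 2 + Bc * w * z + C * z ^+ 2) =
  (2 * A * w + Bc * z) ^+ 2 + (4 * A * C - Bc ^+ 2) * z ^+ 2 by ring.
by rewrite addr_ge0 ?sqr_ge0 // mulr_ge0 ?sqr_ge0 // subr_ge0.
Qed.

Lemma binary_quadratic_gt0 A Bc C w z :
  0 <= A -> Bc ^+ 2 < 4 * A * C -> (w != 0) || (z != 0) ->
  0 < A * w ^+ 2 + Bc * w * z + C * z ^+ 2.
Proof.
move=> A_ge0 disc_lt0 wz_neq0.
have A_gt0 : 0 < A.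
  rewrite lt_def A_ge0 andbT; apply: contraTneq disc_lt0 => ->.
  by rewrite mulr0 mul0r -leNgt sqr_ge0.
rewrite -(pmulr_rgt0 _ (mulr_gt0 (ltr0Sn _ 3) A_gt0)).
have -> : 4 * A * (A * w ^+ 2 + Bc * w * z + C * z ^+ 2) =
  (2 * A * w + Bc * z) ^+ 2 + (4 * A * C - Bc ^+ 2) * z ^+ 2 by ring.
have [z0 | z_neq0] := eqVneq z 0.
  rewrite z0 eqxx orbF in wz_neq0.
  rewrite z0 !(mulr0, addr0, expr0n) /= exprn_even_gt0 //.
  by rewrite !mulf_neq0 ?pnatr_eq0 ?(gt_eqF A_gt0).
by rewrite ltr_wpDl ?sqr_ge0 // mulr_gt0 ?subr_gt0 ?exprn_even_gt0.
Qed.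

Lemma linear_term_eq0 r c1 c0 :
  (forall d, 0 <= d ^+ 2 * (d ^+ 2 + c1 * d + c0) + r * d) -> r = 0.
Proof.
move=> ge0; apply/eqP/negPn/negP => r_neq0.
pose N := 1 + r ^+ 2 + `|c1 * r| + `|c0|.
have N_ge1 : 1 <= N.
  by rewrite /N; have := sqr_ge0 r; have := normr_ge0 (c1 * r); have := normr_ge0 c0; lra.
have N_gt0 : 0 < N by apply: lt_le_trans N_ge1.
pose d := - (r / N).
have sqr_d_le : d ^+ 2 <= r ^+ 2.
  have d_le : `|d| <= `|r|.
    by rewrite normrN normf_div (gtr0_norm N_gt0) ler_pdivrMr // ler_peMr.
  rewrite -[d ^+ 2]ger0_norm ?sqr_ge0 // -[r ^+ 2]ger0_norm ?sqr_ge0 //.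
  by rewrite !normrX ler_pXn2r ?nnegrE ?normr_ge0.
have c1d_le : c1 * d <= `|c1 * r|.
  rewrite (le_trans (ler_norm _)) // normrM normrN normf_div (gtr0_norm N_gt0).
  by rewrite mulrA -normrM ler_pdivrMr // ler_peMr.
have c0_le := ler_norm c0.
have := ge0 d.
have -> : d ^+ 2 * (d ^+ 2 + c1 * d + c0) + r * d =
  r ^+ 2 / N ^+ 2 * ((d ^+ 2 + c1 * d + c0) - N).
  by rewrite /d; field; rewrite gt_eqF.
rewrite pmulr_rge0; last by apply: divr_gt0; [rewrite exprn_even_gt0 | exact: exprn_gt0].
by rewrite /N; lra.
Qed.

Lemma quadratic_offset_ge0 a b e f :
  (forall t, 0 <= ((t - a) ^+ 2 + b ^+ 2) * ((t - e) ^+ 2 + f)) -> 0 <= f.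
Proof.
move=> ge0; rewrite leNgt; apply/negP => f_lt0.
pose u := Num.sqrt (- f) / 2.
have u_gt0 : 0 < u by rewrite divr_gt0 // sqrtr_gt0 oppr_gt0.
have sqr_u : u ^+ 2 = - f / 4 by rewrite expr_div_n sqr_sqrtr ?oppr_ge0 ?ltW //; field.
have [t t_neq_a sqr_t] : exists2 t, t != a & (t - e) ^+ 2 = u ^+ 2.
  have [eu_a | eu_neq_a] := eqVneq (e + u) a; last by exists (e + u); rewrite // addrC addKr.
  exists (e - u); last by rewrite addrAC subrr add0r sqrrN.
  by apply/eqP => eq_a; lra.
have := ge0 t; rewrite pmulr_rge0; first by rewrite sqr_t sqr_u; lra.
by rewrite ltr_wpDr ?sqr_ge0 // exprn_even_gt0 // subr_eq0.
Qed.

End RealInequalities.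

Section MonicQuartic.
Variable R : rcfType.
Implicit Types (a b e f h B g D : R).

(* Real and imaginary parts of [t^4 + a3 t^3 + a2 t^2 + a1 t + a0] at [t = a + i b]. *)
Lemma monic_quartic_complex_root a0 a1 a2 a3 : exists a b,
  a ^+ 4 - 6 * a ^+ 2 * b ^+ 2 + b ^+ 4 + a3 * (a ^+ 3 - 3 * a * b ^+ 2)
    + a2 * (a ^+ 2 - b ^+ 2) + a1 * a + a0 = 0 /\
  4 * a ^+ 3 * b - 4 * a * b ^+ 3 + a3 * (3 * a ^+ 2 * b - b ^+ 3)
    + 2 * a2 * a * b + a1 * b = 0.
Proof.
have [[a b]] := @complex_acf_axiom R 4
  (nth 0 [:: (- a0)%:C; (- a1)%:C; (- a2)%:C; (- a3)%:C])%C isT.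
rewrite !big_ord_recl big_ord0 /bump /= !exprS !expr0; simpc.
case=> /eqP re /eqP im; exists a, b.
by split; apply/eqP; [move: re | move: im]; rewrite -subr_eq0 => /eqP <-; apply/eqP; ring.
Qed.

Lemma nonneg_monic_quartic_factor a0 a1 a2 a3 :
  (forall t, 0 <= quartic a0 a1 a2 a3 t 1) ->
  exists a b e f, [/\ 0 <= f, a3 = - 2 * (a + e),
    a2 = a ^+ 2 + b ^+ 2 + 4 * a * e + e ^+ 2 + f,
    a1 = - 2 * a * (e ^+ 2 + f) - 2 * e * (a ^+ 2 + b ^+ 2)
  & a0 = (a ^+ 2 + b ^+ 2) * (e ^+ 2 + f)].
Proof.
move=> ge0; have [a [b [root_re root_im]]] := monic_quartic_complex_root a0 a1 a2 a3.
(* Divide by [(t - a)^2 + b^2], with quotient [t^2 + g1 t + g0] and remainder [r1 t + r0]. *)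
have [g1 a3E] : exists g1, a3 = g1 - 2 * a by exists (a3 + 2 * a); ring.
have [g0 a2E] : exists g0, a2 = g0 + (a ^+ 2 + b ^+ 2) - 2 * a * g1.
  by exists (a2 - (a ^+ 2 + b ^+ 2) + 2 * a * g1); ring.
have [r1 a1E] : exists r1, a1 = r1 - 2 * a * g0 + (a ^+ 2 + b ^+ 2) * g1.
  by exists (a1 + 2 * a * g0 - (a ^+ 2 + b ^+ 2) * g1); ring.
have [r0 a0E] : exists r0, a0 = r0 + (a ^+ 2 + b ^+ 2) * g0.
  by exists (a0 - (a ^+ 2 + b ^+ 2) * g0); ring.
subst a3 a2 a1 a0.
have r0E : r0 = - (r1 * a) by apply/eqP; rewrite -addr_eq0 -root_re; apply/eqP; ring.
have r_im : r1 * b = 0 by rewrite -root_im; ring.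
have r1_0 : r1 = 0.
  have [b0 | b_neq0] := eqVneq b 0; last first.
    by move/eqP: r_im; rewrite mulf_eq0 (negPf b_neq0) orbF => /eqP.
  apply: (@linear_term_eq0 _ r1 (2 * a + g1) (a ^+ 2 + g1 * a + g0)) => d.
  by move: (ge0 (a + d)); congr (_ <= _); rewrite /quartic r0E b0; ring.
move: ge0; rewrite r0E r1_0 => ge0.
have f_ge0 : 0 <= g0 - g1 ^+ 2 / 4.
  apply: (@quadratic_offset_ge0 _ a b (- g1 / 2)) => t.
  by move: (ge0 t); congr (_ <= _); rewrite /quartic; field.
by exists a, b, (- g1 / 2), (g0 - g1 ^+ 2 / 4); split=> //; field.
Qed.

Lemma form_psd_quartic_sos a0 a1 a2 a3 :
  form_psd (quartic a0 a1 a2 a3) ->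
  exists h B g D, [/\ a3 = 4 * h, a2 = 6 * h ^+ 2 + 2 * B + g ^+ 2,
    a1 = 4 * h ^+ 3 + 2 * h * (2 * B + g ^+ 2) + 2 * g * D
  & a0 = h ^+ 4 + (2 * B + g ^+ 2) * h ^+ 2 + 2 * g * D * h + B ^+ 2 + D ^+ 2].
Proof.
move=> psd; have ge0 t : 0 <= quartic a0 a1 a2 a3 t 1.
  by apply: psd; case=> _ /eqP; rewrite oner_eq0.
have [a [b [e [f [f_ge0 -> -> -> ->]]]]] := nonneg_monic_quartic_factor ge0.
have [F ->] : exists F, f = F ^+ 2 by exists (Num.sqrt f); rewrite sqr_sqrtr.
(* ((t-a)^2 + b^2)((t-e)^2 + F^2) = ((t-a)(t-e) - bF)^2 + ((t-a)F + b(t-e))^2,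
   recentred at t = -h. *)
pose h := - (a + e) / 2.
exists h, (a * e - b * F - h ^+ 2), (F + b), (- (a * F + b * e) - (F + b) * h).
by rewrite /h; split; field.
Qed.

End MonicQuartic.

Definition gram_qform (R : rcfType) (a0 a1 a2 a3 lam u w z : R) : R :=
  u ^+ 2 + a3 * u * w + (a2 - lam) * u * z + lam * w ^+ 2 + a1 * w * z + a0 * z ^+ 2.

Definition col3 (R : rcfType) (u w z : R) : 'cV[R]_3 := \col_(i < 3) nth 0 [:: u; w; z] i.

Section GramMatrix.
Variables (R : rcfType) (a0 a1 a2 a3 lam : R).
Implicit Types (u w x y z : R).

Lemma col3_eta (v : 'cV[R]_3) : v = col3 (v 0 0) (v 1 0) (v 2 0).
Proof.
apply/matrixP => i j; rewrite !mxE (ord1 j).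
by case: i => [[|[|[|i]]] ?] //=; congr (v _ _); apply: val_inj.
Qed.

Lemma col3_eq0 u w z : (col3 u w z == 0) = [&& u == 0, w == 0 & z == 0].
Proof.
apply/eqP/and3P => [c0 | [/eqP-> /eqP-> /eqP->]].
  have entry0 i : col3 u w z i 0 = 0 by rewrite c0 mxE.
  by move: (entry0 0) (entry0 1) (entry0 2); rewrite !mxE /= => -> -> ->.
by apply/matrixP => i j; rewrite !mxE; case: i => [[|[|[|i]]] ?].
Qed.

Lemma Mlam_col3E u w z :
  ((col3 u w z)^T *m Mlam a0 a1 a2 a3 lam *m col3 u w z) 0 0 =
  gram_qform a0 a1 a2 a3 lam u w z.
Proof.
rewrite /gram_qform !mxE !big_ord_recl !big_ord0 !mxE /=.
by rewrite !big_ord_recl !big_ord0 !mxE /=; field.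
Qed.

Lemma mx_psd_MlamP :
  mx_psd (Mlam a0 a1 a2 a3 lam) <-> forall u w z, 0 <= gram_qform a0 a1 a2 a3 lam u w z.
Proof.
split=> [psd u w z | ge0 v]; first by rewrite -Mlam_col3E.
by rewrite [v]col3_eta Mlam_col3E.
Qed.

Lemma mx_pd_MlamP :
  mx_pd (Mlam a0 a1 a2 a3 lam) <->
  forall u w z, [|| u != 0, w != 0 | z != 0] -> 0 < gram_qform a0 a1 a2 a3 lam u w z.
Proof.
split=> [pd u w z nz | gt0 v v_neq0].
  by rewrite -Mlam_col3E; apply: pd; rewrite col3_eq0 !negb_and.
by rewrite [v]col3_eta Mlam_col3E gt0 // -!negb_and -col3_eq0 -col3_eta.
Qed.

Lemma quartic_gram_qform x y :
  quartic a0 a1 a2 a3 x y = gram_qform a0 a1 a2 a3 lam (x ^+ 2) (x * y) (y ^+ 2).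
Proof. by rewrite /quartic /gram_qform; ring. Qed.

Lemma form_psd_of_mx_psd :
  mx_psd (Mlam a0 a1 a2 a3 lam) -> form_psd (quartic a0 a1 a2 a3).
Proof. by move=> /mx_psd_MlamP ge0 x y _; rewrite quartic_gram_qform. Qed.

Lemma form_pd_of_mx_pd :
  mx_pd (Mlam a0 a1 a2 a3 lam) -> form_pd (quartic a0 a1 a2 a3).
Proof.
move=> /mx_pd_MlamP gt0 x y xy_neq0; rewrite quartic_gram_qform gt0 //.
apply: contra_notT xy_neq0; rewrite !negb_or !negbK !sqrf_eq0.
by case/and3P => /eqP-> _ /eqP->.
Qed.

End GramMatrix.

Section GramOfSumOfSquares.
Variables (R : rcfType) (a0 a1 a2 a3 h B g D : R).
Hypotheses (a3E : a3 = 4 * h) (a2E : a2 = 6 * h ^+ 2 + 2 * B + g ^+ 2)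
  (a1E : a1 = 4 * h ^+ 3 + 2 * h * (2 * B + g ^+ 2) + 2 * g * D)
  (a0E : a0 = h ^+ 4 + (2 * B + g ^+ 2) * h ^+ 2 + 2 * g * D * h + B ^+ 2 + D ^+ 2).

Lemma quartic_shifted_sos tau :
  quartic a0 a1 a2 a3 (tau - h) 1 = (tau ^+ 2 + B) ^+ 2 + (g * tau + D) ^+ 2.
Proof. by rewrite /quartic a3E a2E a1E a0E; ring. Qed.

Let P := 2 * B + g ^+ 2.
Let X := g ^+ 2 - 4 * B.
Let s := 2 * Num.sqrt (3 * b1 a0 a1 a2 a3 + 4 * b2 a2 ^+ 2).
Let L := (2 * P + s) / 3.
Let C := B ^+ 2 + D ^+ 2 - (P - L) ^+ 2 / 4.

(* The radicand is a quarter of the invariant I = 12 a0 - 3 a1 a3 + a2^2 of the quartic. *)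
Lemma radicand_sos :
  3 * b1 a0 a1 a2 a3 + 4 * b2 a2 ^+ 2 = (12 * (B ^+ 2 + D ^+ 2) + P ^+ 2) / 4.
Proof. by rewrite /b1 /b2 a3E a2E a1E a0E /P; field. Qed.

Lemma lambda0_real_sos : lambda0_real a0 a1 a2 a3.
Proof.
rewrite /lambda0_real radicand_sos divr_ge0 // addr_ge0 ?sqr_ge0 //.
by rewrite mulr_ge0 // addr_ge0 ?sqr_ge0.
Qed.

Let s_ge0 : 0 <= s. Proof. by rewrite mulr_ge0 ?sqrtr_ge0. Qed.

Let sqr_s : s ^+ 2 = 12 * (B ^+ 2 + D ^+ 2) + P ^+ 2.
Proof. by rewrite exprMn (sqr_sqrtr lambda0_real_sos) radicand_sos; field. Qed.

Lemma lambda0_sos : lambda0 a0 a1 a2 a3 = 4 * h ^+ 2 + L.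
Proof. by rewrite /lambda0 /L /s /P /b2 a2E; field. Qed.

Lemma gram_qform_sosE u w z :
  gram_qform a0 a1 a2 a3 (lambda0 a0 a1 a2 a3) u w z =
  (u + 2 * h * w + (h ^+ 2 + (P - L) / 2) * z) ^+ 2 +
  (L * (w + h * z) ^+ 2 + 2 * g * D * (w + h * z) * z + C * z ^+ 2).
Proof. by rewrite lambda0_sos /gram_qform a3E a2E a1E a0E /C /P; field. Qed.

Let P_le_s : P <= s.
Proof.
apply: ler_of_sqr_le s_ge0 _; rewrite sqr_s.
by have := sqr_ge0 B; have := sqr_ge0 D; lra.
Qed.

Let two_P_add_s_ge0 : 0 <= 2 * P + s.
Proof.
have := s_ge0; have [P_ge0 | P_lt0] := leP 0 P; first lra.
suff : - (2 * P) <= s by lra.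
apply: ler_of_sqr_le s_ge0 _; rewrite sqr_s.
have : g ^+ 2 * (4 * B + g ^+ 2) <= 0.
  by rewrite mulr_ge0_le0 ?sqr_ge0 //; move: P_lt0; rewrite /P; have := sqr_ge0 g; lra.
have -> : (- (2 * P)) ^+ 2 =
  12 * (B ^+ 2 + D ^+ 2) + P ^+ 2 + 3 * (g ^+ 2 * (4 * B + g ^+ 2)) - 12 * D ^+ 2.
  by rewrite /P; ring.
by have := sqr_ge0 D; lra.
Qed.

Let X_add_2s_ge0 : 0 <= X + 2 * s.
Proof.
suff : - X <= 2 * s by lra.
apply: ler_of_sqr_le; first by rewrite mulr_ge0 ?s_ge0.
have -> : (2 * s) ^+ 2 = (- X) ^+ 2 + 3 * (4 * B + g ^+ 2) ^+ 2 + 48 * D ^+ 2.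
  by rewrite exprMn sqr_s /X /P; ring.
by have := sqr_ge0 (4 * B + g ^+ 2); have := sqr_ge0 D; lra.
Qed.

Let L_ge0 : 0 <= L. Proof. by rewrite divr_ge0 ?two_P_add_s_ge0. Qed.

Let C_ge0 : 0 <= C.
Proof.
have -> : C = (s - P) * (2 * P + s) / 18 + (12 * (B ^+ 2 + D ^+ 2) + P ^+ 2 - s ^+ 2) / 12.
  by rewrite /C /L; field.
by rewrite sqr_s subrr mul0r addr0 divr_ge0 // mulr_ge0 ?subr_ge0 ?P_le_s ?two_P_add_s_ge0.
Qed.

Lemma disc_sosE : 27 * (4 * L * C - (2 * g * D) ^+ 2) = (X - s) ^+ 2 * (X + 2 * s).
Proof.
apply/eqP; rewrite -subr_eq0; apply/eqP.
transitivity ((12 * (B ^+ 2 + D ^+ 2) + P ^+ 2 - s ^+ 2) * (6 * P + 3 * s - 9 * g ^+ 2)).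
  by rewrite /C /L /X /P; field.
by rewrite sqr_s subrr mul0r.
Qed.

Let disc_ge0 : (2 * g * D) ^+ 2 <= 4 * L * C.
Proof.
have : 0 <= (X - s) ^+ 2 * (X + 2 * s) by rewrite mulr_ge0 ?sqr_ge0 ?X_add_2s_ge0.
by rewrite -disc_sosE; lra.
Qed.

Lemma mx_psd_sos : mx_psd (Mlam a0 a1 a2 a3 (lambda0 a0 a1 a2 a3)).
Proof.
apply/mx_psd_MlamP => u w z; rewrite gram_qform_sosE.
by rewrite addr_ge0 ?sqr_ge0 // binary_quadratic_ge0 ?L_ge0 ?C_ge0 ?disc_ge0.
Qed.

Lemma sos_common_root :
  (X - s) ^+ 2 * (X + 2 * s) = 0 -> exists tau, tau ^+ 2 + B = 0 /\ g * tau + D = 0.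
Proof.
(* X = s forces D^2 + B g^2 = 0, while X = -2s forces g = B = D = 0. *)
move/eqP; rewrite mulf_eq0 sqrf_eq0 subr_eq0 => /orP [/eqP X_s | /eqP X_2s].
  have D2 : D ^+ 2 + B * g ^+ 2 = 0.
    have : s ^+ 2 - X ^+ 2 = 12 * (D ^+ 2 + B * g ^+ 2) by rewrite sqr_s /X /P; ring.
    by rewrite X_s subrr; lra.
  have [g0 | g_neq0] := eqVneq g 0; last first.
    exists (- D / g); split; last by field.
    have -> : (- D / g) ^+ 2 + B = (D ^+ 2 + B * g ^+ 2) / g ^+ 2 by field.
    by rewrite D2 mul0r.
  move: D2 X_s; rewrite /X g0 expr0n /= mulr0 addr0 sub0r => /eqP.
  rewrite sqrf_eq0 => /eqP -> X_s.
  exists (Num.sqrt (- B)); rewrite mul0r add0r sqr_sqrtr ?addNr //.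
  by have := s_ge0; lra.
have : 3 * (4 * B + g ^+ 2) ^+ 2 + 48 * D ^+ 2 = (2 * s) ^+ 2 - X ^+ 2.
  by rewrite exprMn sqr_s /X /P; ring.
have -> : X = - (2 * s) by lra.
rewrite sqrrN subrr => sum0.
have := sqr_ge0 D; have := sqr_ge0 (4 * B + g ^+ 2) => Bg_sqr_ge0 D_sqr_ge0.
have /eqP : (4 * B + g ^+ 2) ^+ 2 = 0 by lra.
have /eqP : D ^+ 2 = 0 by lra.
rewrite !sqrf_eq0 => /eqP D0 /eqP Bg0.
have g2_0 : g ^+ 2 = 0 by move: X_2s; rewrite /X; have := s_ge0; have := sqr_ge0 g; lra.
exists 0; rewrite D0 mulr0 addr0 expr0n /=; split=> //.
by move: Bg0; rewrite g2_0 addr0; lra.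
Qed.

Lemma mx_pd_sos :
  form_pd (quartic a0 a1 a2 a3) -> mx_pd (Mlam a0 a1 a2 a3 (lambda0 a0 a1 a2 a3)).
Proof.
move=> pd.
have disc_lt0 : (2 * g * D) ^+ 2 < 4 * L * C.
  have : 0 < (X - s) ^+ 2 * (X + 2 * s).
    rewrite lt_def mulr_ge0 ?sqr_ge0 ?X_add_2s_ge0 // andbT.
    apply/eqP => /sos_common_root [tau [root1 root2]].
    have nz : ~ (tau - h = 0 /\ (1 : R) = 0) by case=> _ /eqP; rewrite oner_eq0.
    by have := pd _ _ nz; rewrite quartic_shifted_sos root1 root2 expr0n addr0 ltxx.
  by rewrite -disc_sosE; lra.
apply/mx_pd_MlamP => u w z nz; rewrite gram_qform_sosE.
have [wz_neq0 | ] := boolP ((w + h * z != 0) || (z != 0)).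
  by rewrite ltr_wpDl ?sqr_ge0 // binary_quadratic_gt0 ?L_ge0.
rewrite negb_or !negbK => /andP [/eqP whz0 /eqP z0].
have w0 : w = 0 by rewrite z0 mulr0 addr0 in whz0.
rewrite w0 z0 eqxx !orbF in nz.
by rewrite w0 z0 !(mulr0, addr0, mul0r, expr0n) /= exprn_even_gt0.
Qed.

End GramOfSumOfSquares.

Theorem theorem1 (R : rcfType) (a0 a1 a2 a3 : R) :
  (form_psd (quartic a0 a1 a2 a3) <->
     lambda0_real a0 a1 a2 a3 /\ mx_psd (Mlam a0 a1 a2 a3 (lambda0 a0 a1 a2 a3)))
  /\
  (form_pd (quartic a0 a1 a2 a3) <->
     lambda0_real a0 a1 a2 a3 /\ mx_pd (Mlam a0 a1 a2 a3 (lambda0 a0 a1 a2 a3))).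
Proof.
have pd_psd : form_pd (quartic a0 a1 a2 a3) -> form_psd (quartic a0 a1 a2 a3).
  by move=> pd x y /pd /ltW.
split; split.
- move=> /form_psd_quartic_sos [h [B [g [D [a3E a2E a1E a0E]]]]].
  by split; [exact: lambda0_real_sos a3E a2E a1E a0E | exact: mx_psd_sos a3E a2E a1E a0E].
- by case=> _ /form_psd_of_mx_psd.
- move=> pd; have [h [B [g [D [a3E a2E a1E a0E]]]]] := form_psd_quartic_sos (pd_psd pd).
  by split; [exact: lambda0_real_sos a3E a2E a1E a0E | exact: mx_pd_sos a3E a2E a1E a0E pd].
- by case=> _ /form_pd_of_mx_pd.
Qed.
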